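(* Let $\mathcal{M}^c=\langle\mathcal{W},\mathcal{N},\mathcal{V}\rangle$ be the canonical model for $\mathbb{PCL}$ defined in the context. For every formula $F$, every maximal consistent set $X$ and every formula $A\in X$: $F\in X$ if and only if $\mathcal{M}^c,(X,A)\Vdash F$.
   Context: Formulas $\mathcal{L}::=p\mid\bot\mid A\wedge B\mid A\lor B\mid A\to B\mid A>B$. Derivability $\vdash$ is in the axiom system of $\mathbb{PCL}$: classical propositional logic, rules (RCEA) from $A\leftrightarrow B$ infer $(A>C)\leftrightarrow(B>C)$, (RCK) from $A\to B$ infer $(C>A)\to(C>B)$, axioms (ID) $A>A$, (R-And) $(A>B)\wedge(A>C)\to(A>(B\wedge C))$, (CM) $(A>B)\wedge(A>C)\to((A\wedge B)>C)$, (OR) $(A>C)\wedge(B>C)\to((A\lor B)>C)$. A set $S$ is inconsistent if $\vdash(B_1\wedge\dots\wedge B_n)\to\bot$ for some $B_i\in S$; maximal consistent sets are consistent sets with no consistent proper superset. For a maximal consistent set $X$: $X^B=\{C\mid B>C\in X\}$; $A\le_X B$ iff $(A\lor B)>A\in X$. Canonical model: $\mathcal{W}=\{(X,A)\mid X$ maximal consistent, $A\in X\}$; $\mathcal{V}(p)=\{(X,A)\in\mathcal{W}\mid p\in X\}$; for $(X,A),(Y,B)\in\mathcal{W}$, $S_X(Y,B)=\{(Z,C)\in\mathcal{W}\mid X^C\subseteq Z,\ C\le_X B,\ B\notin Z\}\cup\{(Y,B)\}$; $\mathcal{N}(X,A)=\{S_X(Y,B)\mid (Y,B)\in\mathcal{W},\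 X^B\subseteq Y\}$. Forcing in a neighbourhood model $\langle W,N,V\rangle$: atoms via $V$, Boolean connectives classical, and $x\Vdash G>H$ iff for all $\alpha\in N(x)$, if some $y\in\alpha$ forces $G$, then there is $\beta\in N(x)$ with $\beta\subseteq\alpha$ such that some $y\in\beta$ forces $G$ and all $y\in\beta$ force $G\to H$. *)

From Stdlib Require Import List.
Import ListNotations.
Set Implicit Arguments.

Inductive form : Type :=
| Var : nat -> form
| Bot : form
| And : form -> form -> form
| Or  : form -> form -> form
| Imp : form -> form -> form
| Cond : form -> form -> form.

Definition Iff (A B : form) : form := And (Imp A B) (Imp B A).

(** Classical propositional logic: a formula is a tautology if it is true under
    every boolean valuation of its propositional atoms, where the atoms are the
    variables and the conditional formulas A > B (treated as opaque). *)
Fixpoint beval (v : form -> bool) (F : form) : bool :=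
  match F with
  | Var _ => v F
  | Bot => false
  | And A B => andb (beval v A) (beval v B)
  | Or A B => orb (beval v A) (beval v B)
  | Imp A B => orb (negb (beval v A)) (beval v B)
  | Cond _ _ => v F
  end.

Definition taut (F : form) : Prop := forall v : form -> bool, beval v F = true.

Inductive Der : form -> Prop :=
| D_taut : forall A, taut A -> Der A
| D_mp : forall A B, Der (Imp A B) -> Der A -> Der B
| D_RCEA : forall A B C, Der (Iff A B) -> Der (Iff (Cond A C) (Cond B C))
| D_RCK : forall A B C, Der (Imp A B) -> Der (Imp (Cond C A) (Cond C B))
| D_ID : forall A, Der (Cond A A)
| D_RAnd : forall A B C,
    Der (Imp (And (Cond A B) (Cond A C)) (Cond A (And B C)))
| D_CM : forall A B C,
    Der (Imp (And (Cond A B) (Cond A C)) (Cond (And A B) C))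
| D_OR : forall A B C,
    Der (Imp (And (Cond A C) (Cond B C)) (Cond (Or A B) C)).

Definition fset := form -> Prop.

Fixpoint bigAnd (l : list form) : form :=
  match l with
  | [] => Imp Bot Bot
  | [B] => B
  | B :: l' => And B (bigAnd l')
  end.

Definition inconsistent (S : fset) : Prop :=
  exists l : list form, (forall B, In B l -> S B) /\ Der (Imp (bigAnd l) Bot).

Definition consistent (S : fset) : Prop := ~ inconsistent S.

Definition maxcons (X : fset) : Prop :=
  consistent X /\
  forall Y : fset, consistent Y -> (forall F, X F -> Y F) -> (forall F, Y F -> X F).

Definition condset (X : fset) (B : form) : fset := fun C => X (Cond B C).
Definition leX (X : fset) (A B : form) : Prop := X (Cond (Or A B) A).

Definition subset (S T : fset) : Prop := forall F, S F -> T F.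

Record nmodel := {
  W : Type;
  N : W -> (W -> Prop) -> Prop;
  V : nat -> W -> Prop
}.

Fixpoint forces (M : nmodel) (x : W M) (F : form) : Prop :=
  match F with
  | Var p => V M p x
  | Bot => False
  | And A B => forces M x A /\ forces M x B
  | Or A B => forces M x A \/ forces M x B
  | Imp A B => forces M x A -> forces M x B
  | Cond G H =>
      forall alpha : W M -> Prop, N M x alpha ->
        (exists y, alpha y /\ forces M y G) ->
        exists beta : W M -> Prop,
          N M x beta /\ (forall y, beta y -> alpha y) /\
          (exists y, beta y /\ forces M y G) /\
          (forall y, beta y -> forces M y G -> forces M y H)
  end.

Definition cworld : Type := { p : fset * form | maxcons (fst p) /\ fst p (snd p) }.
Definition wset (w : cworld) : fset := fst (proj1_sig w).
Definition wform (w : cworld) : form := snd (proj1_sig w).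

Definition Sset (X : fset) (Y : fset) (B : form) : cworld -> Prop :=
  fun w =>
    (subset (condset X (wform w)) (wset w) /\ leX X (wform w) B /\ ~ wset w B)
    \/ (wset w = Y /\ wform w = B).

Definition cN (x : cworld) (alpha : cworld -> Prop) : Prop :=
  exists y : cworld,
    subset (condset (wset x) (wform y)) (wset y) /\
    (forall w, alpha w <-> Sset (wset x) (wset y) (wform y) w).

Definition cV (p : nat) (x : cworld) : Prop := wset x (Var p).

Definition canonical_model : nmodel := {| W := cworld; N := cN; V := cV |}.

Definition mkworld (X : fset) (A : form) (H : maxcons X /\ X A) : cworld :=
  exist _ (X, A) H.

(** The propositional cases are closure properties of maximal consistent sets.
    The conditional case rests on one property of the preorder: if [X^C] is
    contained in [Z], [C <=_X B <=_X G] and [G] is in [Z], then so is [B],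
    because [C > (G -> B)] is in [X].  Hence in a neighbourhood [S_X(Y,B)] with
    [B <=_X G] every [G]-world has the set [Y].  If [G > H] is in [X], such a
    neighbourhood is fine as it stands, since [B > (G -> H)] is in [X]; any other
    one shrinks to the neighbourhood of a Lindenbaum extension of
    [X^(B \/ G) + ~B], whose [G]-worlds all contain [G -> H].  Conversely, if
    [G > H] is not in [X], extend [X^G + ~H] to a world [(Y,G)]: a neighbourhood
    inside [S_X(Y,G)] that contains a [G]-world must be centred at a world with
    set [Y] and formula [G], a [G]-world omitting [H]. *)
From Stdlib Require Import List Classical Lia.
Import ListNotations.
Set Implicit Arguments.

Lemma beval_Imp v A B :
  beval v (Imp A B) = true <-> (beval v A = true -> beval v B = true).
Proof. simpl; destruct (beval v A), (beval v B); simpl; intuition congruence. Qed.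

Lemma beval_bigAnd v l :
  beval v (bigAnd l) = true <-> (forall B, In B l -> beval v B = true).
Proof.
  induction l as [|a l IH].
  - split; [intros _ B []|reflexivity].
  - assert (E : beval v (bigAnd (a :: l)) = andb (beval v a) (beval v (bigAnd l)))
      by (destruct l; [simpl; destruct (beval v a)|]; reflexivity).
    rewrite E, Bool.andb_true_iff, IH; simpl.
    split; [intros [Ha Hl] B [<-|HB]; auto | auto].
Qed.

Ltac solve_taut :=
  let v := fresh "v" in
  intro v; simpl;
  repeat match goal with |- context [beval v ?x] => destruct (beval v x) end;
  reflexivity.

Definition derivable (S : fset) (F : form) : Prop :=
  exists l, (forall B, In B l -> S B) /\ Der (Imp (bigAnd l) F).

Definition add (S : fset) (F : form) : fset := fun G => S G \/ G = F.

Lemma derivable_in {S F} : S F -> derivable S F.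
Proof.
  intros HF; exists [F]; split; [intros B [<-|[]]; exact HF | apply D_taut; solve_taut].
Qed.

Lemma derivable_Der S F : Der F -> derivable S F.
Proof.
  intros HF; exists []; split; [intros B []|].
  apply (D_mp (A := F)); [apply D_taut; solve_taut | exact HF].
Qed.

Lemma derivable_subset S T F : subset S T -> derivable S F -> derivable T F.
Proof. intros HST [l [Hl D]]; exists l; split; auto. Qed.

Lemma derivable_taut2 {S a b c} :
  (forall v, beval v a = true -> beval v b = true -> beval v c = true) ->
  derivable S a -> derivable S b -> derivable S c.
Proof.
  intros Habc [l1 [H1 D1]] [l2 [H2 D2]]; exists (l1 ++ l2); split.
  - intros B HB; apply in_app_or in HB as [HB|HB]; auto.
  - apply (D_mp (A := Imp (bigAnd l2) b)); [|exact D2].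
    apply (D_mp (A := Imp (bigAnd l1) a)); [|exact D1].
    apply D_taut; intro v; rewrite !beval_Imp; intros E1 E2 E.
    rewrite beval_bigAnd in E.
    apply Habc; [apply E1 | apply E2]; apply beval_bigAnd;
      intros B HB; apply E, in_or_app; auto.
Qed.

Lemma derivable_add S F P : derivable (add S F) P -> derivable S (Imp F P).
Proof.
  intros [l [Hl D]].
  assert (Hsplit : exists l', (forall B, In B l' -> S B) /\
                              (forall B, In B l -> In B l' \/ B = F)).
  { clear D; induction l as [|a l IH].
    - exists []; split; intros B [].
    - destruct IH as [l' [H1 H2]]; [intros B HB; apply Hl; right; exact HB|].
      destruct (Hl a (or_introl eq_refl)) as [Ha|Ha].
      + exists (a :: l'); split; [intros B [<-|HB]; auto|].
        intros B [<-|HB]; [left; left; reflexivity|].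
        destruct (H2 B HB); [left; right|right]; auto.
      + exists l'; split; [exact H1|]. intros B [<-|HB]; auto. }
  destruct Hsplit as [l' [H1 H2]]; exists l'; split; [exact H1|].
  apply (D_mp (A := Imp (bigAnd l) P)); [|exact D].
  apply D_taut; intro v; rewrite !beval_Imp; intros E1 E2 EF.
  apply E1, beval_bigAnd; intros B HB.
  destruct (H2 B HB) as [HB'| ->]; [|exact EF].
  exact (proj1 (beval_bigAnd v l') E2 B HB').
Qed.

Lemma consistent_subset S T : subset S T -> consistent T -> consistent S.
Proof. intros HST HT HS; exact (HT (derivable_subset HST HS)). Qed.

Section MaximalConsistent.
Context {X : fset} (HX : maxcons X).

Lemma maxcons_derivable F : derivable X F -> X F.
Proof.
  intros HF; apply (proj2 HX (add X F)); [|intros G HG; left; exact HG|right; reflexivity].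
  intros Hinc; apply (proj1 HX).
  refine (derivable_taut2 _ HF (derivable_add Hinc)).
  intros v E1 E2; simpl in E2; rewrite E1 in E2; exact E2.
Qed.

Lemma maxcons_Der F : Der F -> X F.
Proof. intros HF; exact (maxcons_derivable (derivable_Der X HF)). Qed.

Lemma maxcons_taut2 {a b c} :
  (forall v, beval v a = true -> beval v b = true -> beval v c = true) ->
  X a -> X b -> X c.
Proof.
  intros Habc Ha Hb; apply maxcons_derivable.
  exact (derivable_taut2 Habc (derivable_in Ha) (derivable_in Hb)).
Qed.

Lemma maxcons_taut1 {a b} : (forall v, beval v a = true -> beval v b = true) -> X a -> X b.
Proof. intros Hab Ha; exact (maxcons_taut2 (fun v E _ => Hab v E) Ha Ha). Qed.

Lemma maxcons_mp {a b} : X (Imp a b) -> X a -> X b.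
Proof. apply maxcons_taut2; intros v E1 E2; rewrite beval_Imp in E1; auto. Qed.

Lemma maxcons_Bot : ~ X Bot.
Proof. intros H; exact (proj1 HX (derivable_in H)). Qed.

Lemma maxcons_neg F : X (Imp F Bot) <-> ~ X F.
Proof.
  split; [intros Hn HF; exact (maxcons_Bot (maxcons_mp Hn HF))|intros HnF].
  apply maxcons_derivable, derivable_add, NNPP; intros Hc.
  apply HnF, (proj2 HX (add X F) Hc); [intros G HG; left; exact HG|right; reflexivity].
Qed.

Lemma maxcons_And a b : X (And a b) <-> X a /\ X b.
Proof.
  split.
  - intros H; split; refine (maxcons_taut1 _ H);
      intros v E; simpl in E; apply Bool.andb_true_iff in E; tauto.
  - intros [Ha Hb]; refine (maxcons_taut2 _ Ha Hb).
    intros v E1 E2; simpl; rewrite E1, E2; reflexivity.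
Qed.

Lemma maxcons_Or a b : X (Or a b) <-> X a \/ X b.
Proof.
  split.
  - intros H; destruct (classic (X a)) as [Ha|Ha]; [left; exact Ha|right].
    apply maxcons_neg in Ha; refine (maxcons_taut2 _ H Ha).
    intros v E1 E2; simpl in *; destruct (beval v a), (beval v b); simpl in *; congruence.
  - intros [H|H]; refine (maxcons_taut1 _ H); intros v E; simpl; rewrite E;
      [reflexivity|apply Bool.orb_true_r].
Qed.

Lemma maxcons_Imp a b : X (Imp a b) <-> (X a -> X b).
Proof.
  split; [intros H; exact (maxcons_mp H)|intros H].
  destruct (classic (X a)) as [Ha|Ha].
  - refine (maxcons_taut1 _ (H Ha)); intros v E; simpl; rewrite E, Bool.orb_true_r; reflexivity.
  - apply maxcons_neg in Ha; refine (maxcons_taut1 _ Ha).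
    intros v E; simpl in *; destruct (beval v a); simpl in *; congruence.
Qed.

End MaximalConsistent.

Section Conditionals.
Context {X : fset} (HX : maxcons X).

Lemma cond_RCK {a b c} : Der (Imp b c) -> X (Cond a b) -> X (Cond a c).
Proof. intros D; exact (maxcons_mp HX (maxcons_Der HX (D_RCK a D))). Qed.

Lemma cond_taut_r {a b c} : taut (Imp b c) -> X (Cond a b) -> X (Cond a c).
Proof. intros T; exact (cond_RCK (D_taut T)). Qed.

Lemma cond_taut_l {a b c} : taut (Iff a b) -> X (Cond a c) -> X (Cond b c).
Proof.
  intros T; pose proof (maxcons_Der HX (D_RCEA c (D_taut T))) as E.
  exact (maxcons_mp HX (proj1 (proj1 (maxcons_And HX _ _) E))).
Qed.

Lemma cond_ID a : X (Cond a a).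
Proof. exact (maxcons_Der HX (D_ID a)). Qed.

Lemma cond_RAnd {a b c} : X (Cond a b) -> X (Cond a c) -> X (Cond a (And b c)).
Proof.
  intros H1 H2; apply (maxcons_mp HX (maxcons_Der HX (D_RAnd a b c))).
  apply maxcons_And; auto.
Qed.

Lemma cond_CM {a b c} : X (Cond a b) -> X (Cond a c) -> X (Cond (And a b) c).
Proof.
  intros H1 H2; apply (maxcons_mp HX (maxcons_Der HX (D_CM a b c))).
  apply maxcons_And; auto.
Qed.

Lemma cond_OR {a b c} : X (Cond a c) -> X (Cond b c) -> X (Cond (Or a b) c).
Proof.
  intros H1 H2; apply (maxcons_mp HX (maxcons_Der HX (D_OR a b c))).
  apply maxcons_And; auto.
Qed.

(* Cumulative transitivity, from OR applied to the cases [P] and [~P]. *)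
Lemma cond_cut {K P Q} : X (Cond K P) -> X (Cond (And K P) Q) -> X (Cond K Q).
Proof.
  intros HP HQ.
  assert (Hpos : X (Cond (And K P) (Imp P Q))) by (refine (cond_taut_r _ HQ); solve_taut).
  assert (Hneg : X (Cond (And K (Imp P Bot)) (Imp P Q)))
    by (refine (cond_taut_r _ (cond_ID _)); solve_taut).
  assert (HPQ : X (Cond K (Imp P Q))) by (refine (cond_taut_l _ (cond_OR Hpos Hneg)); solve_taut).
  refine (cond_taut_r _ (cond_RAnd HP HPQ)); solve_taut.
Qed.

Lemma condset_derivable A F : derivable (condset X A) F -> X (Cond A F).
Proof.
  intros [l [Hl D]]; apply (cond_RCK D); clear D.
  induction l as [|a l IH].
  - refine (cond_taut_r _ (cond_ID _)); solve_taut.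
  - destruct l as [|b l]; [apply Hl; left; reflexivity|].
    apply cond_RAnd; [apply Hl; left; reflexivity|].
    apply IH; intros B HB; apply Hl; right; exact HB.
Qed.

Lemma consistent_condset_neg A D :
  ~ X (Cond A D) -> consistent (add (condset X A) (Imp D Bot)).
Proof.
  intros HnAD Hinc; apply HnAD.
  refine (cond_taut_r _ (condset_derivable (derivable_add Hinc))); solve_taut.
Qed.

End Conditionals.

Section Lindenbaum.

Definition extend (T : fset) (F : form) : fset :=
  fun G => T G \/ (G = F /\ consistent (add T F)).

Fixpoint extend_list (T : fset) (l : list form) : fset :=
  match l with [] => T | F :: l' => extend_list (extend T F) l' end.

(* Every formula occurs in some [forms n]: [n] bounds both its depth and its variables. *)
Fixpoint forms (n : nat) : list form :=
  match n with
  | 0 => [Bot; Var 0]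
  | S k =>
      Var (S k) :: forms k ++
      flat_map (fun a => flat_map (fun b => [And a b; Or a b; Imp a b; Cond a b])
                                  (forms k)) (forms k)
  end.

Fixpoint chain (Gamma : fset) (n : nat) : fset :=
  match n with 0 => Gamma | S k => extend_list (chain Gamma k) (forms k) end.

Definition lindenbaum (Gamma : fset) : fset := fun F => exists n, chain Gamma n F.

Lemma forms_le {n m F} : n <= m -> In F (forms n) -> In F (forms m).
Proof. induction 1; auto; intros HF; right; apply in_or_app; auto. Qed.

Lemma forms_S_binary {n a b c} : In a (forms n) -> In b (forms n) ->
  In c [And a b; Or a b; Imp a b; Cond a b] -> In c (forms (S n)).
Proof.
  intros Ha Hb Hc; right; apply in_or_app; right.
  apply in_flat_map; exists a; split; [exact Ha|].
  apply in_flat_map; exists b; split; [exact Hb|exact Hc].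
Qed.

Lemma forms_complete F : exists n, In F (forms n).
Proof.
  induction F as [p| |a [n1 H1] b [n2 H2]|a [n1 H1] b [n2 H2]
                 |a [n1 H1] b [n2 H2]|a [n1 H1] b [n2 H2]].
  1: exists p; destruct p; simpl; auto.
  1: exists 0; simpl; auto.
  all: exists (S (Nat.max n1 n2));
       refine (forms_S_binary (forms_le _ H1) (forms_le _ H2) _);
       [lia|lia|simpl; tauto].
Qed.

Lemma extend_consistent T F : consistent T -> consistent (extend T F).
Proof.
  intros HT; destruct (classic (consistent (add T F))) as [Hc|Hc].
  - refine (consistent_subset _ Hc); intros G [HG|[-> _]]; [left; exact HG|right; reflexivity].
  - refine (consistent_subset _ HT); intros G [HG|[_ HG]]; [exact HG|contradiction].
Qed.

Lemma extend_list_consistent l : forall T, consistent T -> consistent (extend_list T l).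
Proof. induction l; simpl; auto using extend_consistent. Qed.

Lemma extend_list_subset l : forall T, subset T (extend_list T l).
Proof. induction l; simpl; intros T G HG; auto; apply IHl; left; exact HG. Qed.

Lemma extend_list_decides {l} : forall T F, In F l ->
  exists T', subset T' (extend_list T l) /\ (consistent (add T' F) -> extend_list T l F).
Proof.
  induction l as [|a l IH]; intros T F HF; [destruct HF|].
  destruct HF as [<-|HF]; [|exact (IH (extend T a) F HF)].
  exists T; split; simpl.
  - intros G HG; apply extend_list_subset; left; exact HG.
  - intros Hc; apply extend_list_subset; right; split; [reflexivity|exact Hc].
Qed.

Lemma chain_consistent {Gamma} n : consistent Gamma -> consistent (chain Gamma n).
Proof. intros HS; induction n; simpl; auto using extend_list_consistent. Qed.

Lemma chain_mono {Gamma n m} : n <= m -> subset (chain Gamma n) (chain Gamma m).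
Proof. induction 1 as [|m _ IH]; intros G HG; [exact HG|apply extend_list_subset, IH, HG]. Qed.

Lemma lindenbaum_subset Gamma : subset Gamma (lindenbaum Gamma).
Proof. intros G HG; exists 0; exact HG. Qed.

Lemma lindenbaum_list_chain {Gamma l} :
  (forall B, In B l -> lindenbaum Gamma B) -> exists n, forall B, In B l -> chain Gamma n B.
Proof.
  induction l as [|a l IH]; intros Hl; [exists 0; intros B []|].
  destruct IH as [n Hn]; [intros B HB; apply Hl; right; exact HB|].
  destruct (Hl a (or_introl eq_refl)) as [m Hm].
  exists (Nat.max n m); intros B [<-|HB].
  - refine (chain_mono _ _ Hm); lia.
  - refine (chain_mono _ _ (Hn B HB)); lia.
Qed.

Lemma lindenbaum_maxcons Gamma : consistent Gamma -> maxcons (lindenbaum Gamma).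
Proof.
  intros HS.
  assert (Hc : consistent (lindenbaum Gamma)).
  { intros [l [Hl D]]; destruct (lindenbaum_list_chain Hl) as [n Hn].
    apply (chain_consistent n HS); exists l; split; assumption. }
  split; [exact Hc|]; intros Y HY HsubY F HF.
  destruct (forms_complete F) as [n Hn].
  destruct (extend_list_decides (chain Gamma n) F Hn) as [T' [HT' Hdec]].
  exists (S n); apply Hdec; refine (consistent_subset _ HY).
  intros G [HG| ->]; [apply HsubY; exists (S n); apply HT'; exact HG|exact HF].
Qed.

End Lindenbaum.

Section Preorder.
Context {X : fset} (HX : maxcons X).

Lemma leX_Or_l B G : leX X (Or B G) B.
Proof. refine (cond_taut_l HX _ (cond_ID HX (Or B G))); solve_taut. Qed.

Lemma leX_Or_weaken {C B G} : leX X C (Or B G) -> leX X C B.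
Proof.
  intros HC; unfold leX in *.
  assert (HCB : X (Cond (Or C (Or B G)) (Or C B))) by (refine (cond_taut_r HX _ HC); solve_taut).
  refine (cond_taut_l HX _ (cond_CM HX HCB HC)); solve_taut.
Qed.

Lemma cond_Or_imp {G H} B : X (Cond G H) -> X (Cond (Or B G) (Imp G H)).
Proof.
  intros HGH.
  assert (HG : X (Cond G (Imp G H))) by (refine (cond_taut_r HX _ HGH); solve_taut).
  assert (HnG : X (Cond (And B (Imp G Bot)) (Imp G H)))
    by (refine (cond_taut_r HX _ (cond_ID HX _)); solve_taut).
  refine (cond_taut_l HX _ (cond_OR HX HnG HG)); solve_taut.
Qed.

Lemma cond_leX_imp {G H B} : X (Cond G H) -> leX X B G -> X (Cond B (Imp G H)).
Proof.
  intros HGH HBG.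
  refine (cond_taut_l HX _ (cond_CM HX HBG (cond_Or_imp B HGH))); solve_taut.
Qed.

(* With [K := C \/ (B \/ G)], OR and cut give [K > C], OR gives [K > (G -> B)],
   and cautious monotony moves [G -> B] under [C]. *)
Lemma leX_trans_cond_imp {C B G} : leX X C B -> leX X B G -> X (Cond C (Imp G B)).
Proof.
  unfold leX; intros HCB HBG.
  assert (HKBC : X (Cond (Or C (Or B G)) (Or B C))).
  { refine (cond_taut_l HX _ (cond_OR HX (a := Or B G) (b := Or C B) _ _)); [solve_taut| |];
      [refine (cond_taut_r HX _ HBG)|refine (cond_taut_r HX _ HCB)]; solve_taut. }
  assert (HKC : X (Cond (Or C (Or B G)) C)).
  { refine (cond_cut HX HKBC _); refine (cond_taut_l HX _ HCB); solve_taut. }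
  assert (HKGB : X (Cond (Or C (Or B G)) (Imp G B))).
  { refine (cond_taut_l HX _ (cond_OR HX (a := Or B G)
                                 (b := And C (And (Imp B Bot) (Imp G Bot))) _ _));
      [solve_taut|refine (cond_taut_r HX _ HBG)|refine (cond_taut_r HX _ (cond_ID HX _))];
      solve_taut. }
  refine (cond_taut_l HX _ (cond_CM HX HKC HKGB)); solve_taut.
Qed.

Lemma condset_leX_mem {Z C B G} : maxcons Z -> subset (condset X C) Z ->
  leX X C B -> leX X B G -> Z G -> Z B.
Proof.
  intros HZ Hsub HCB HBG HG.
  exact (maxcons_mp HZ (Hsub _ (leX_trans_cond_imp HCB HBG)) HG).
Qed.

End Preorder.

Lemma wset_maxcons (w : cworld) : maxcons (wset w).
Proof. exact (proj1 (proj2_sig w)). Qed.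

Lemma wset_wform (w : cworld) : wset w (wform w).
Proof. exact (proj2 (proj2_sig w)). Qed.

Lemma exists_world_condset {X A D} : maxcons X -> ~ X (Cond A D) ->
  exists w : cworld, wform w = A /\ subset (condset X A) (wset w) /\ ~ wset w D.
Proof.
  intros HX HnAD.
  set (Y := lindenbaum (add (condset X A) (Imp D Bot))).
  assert (HY : maxcons Y) by exact (lindenbaum_maxcons (consistent_condset_neg HX HnAD)).
  assert (Hsub : subset (add (condset X A) (Imp D Bot)) Y) by apply lindenbaum_subset.
  assert (HA : Y A) by (apply Hsub; left; apply (cond_ID HX)).
  exists (@mkworld Y A (conj HY HA)); split; [reflexivity|split].
  - intros F HF; apply Hsub; left; exact HF.
  - apply (maxcons_neg HY); apply Hsub; right; reflexivity.
Qed.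

Definition nbhd (X : fset) (y : cworld) : cworld -> Prop := Sset X (wset y) (wform y).

Lemma cN_nbhd x y : subset (condset (wset x) (wform y)) (wset y) -> cN x (nbhd (wset x) y).
Proof. intros Hy; exists y; split; [exact Hy|reflexivity]. Qed.

Lemma nbhd_center X y : nbhd X y y.
Proof. right; split; reflexivity. Qed.

Section Neighbourhoods.
Context {X : fset} (HX : maxcons X).

Lemma nbhd_leX_mem {y u G} :
  leX X (wform y) G -> nbhd X y u -> wset u G -> wset u = wset y.
Proof.
  intros HyG [[Hsub [Huy Hny]] | [Hset _]] HuG; [exfalso|exact Hset].
  exact (Hny (condset_leX_mem HX (wset_maxcons u) Hsub Huy HyG HuG)).
Qed.

Lemma nbhd_leX_cond {y G H} :
  subset (condset X (wform y)) (wset y) -> X (Cond G H) -> leX X (wform y) G ->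
  forall u, nbhd X y u -> wset u G -> wset u H.
Proof.
  intros Hy HGH HyG u Hu HuG.
  rewrite (nbhd_leX_mem HyG Hu HuG) in HuG |- *.
  exact (maxcons_mp (wset_maxcons y) (Hy _ (cond_leX_imp HX HGH HyG)) HuG).
Qed.

Lemma nbhd_refine_subset {y y' G} :
  wform y' = Or (wform y) G -> subset (condset X (wform y')) (wset y') ->
  ~ wset y' (wform y) -> forall u, nbhd X y' u -> nbhd X y u.
Proof.
  intros Hform Hsub HnB u [[Husub [Hle Hn]] | [Hset Hformu]]; left.
  - rewrite Hform in Hle, Hn; split; [exact Husub|split; [exact (leX_Or_weaken HX Hle)|]].
    intros HB; apply Hn, (maxcons_Or (wset_maxcons u)); left; exact HB.
  - rewrite Hset, Hformu; split; [exact Hsub|split; [rewrite Hform; apply (leX_Or_l HX)|exact HnB]].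
Qed.

Lemma nbhd_refine_cond {y' B G H} :
  wform y' = Or B G -> subset (condset X (Or B G)) (wset y') -> X (Cond G H) ->
  forall u, nbhd X y' u -> wset u G -> wset u H.
Proof.
  intros Hform Hsub HGH u [[_ [_ Hn]] | [Hset _]] HuG.
  - exfalso; rewrite Hform in Hn; apply Hn, (maxcons_Or (wset_maxcons u)); right; exact HuG.
  - rewrite Hset in HuG |- *.
    exact (maxcons_mp (wset_maxcons y') (Hsub _ (cond_Or_imp HX B HGH)) HuG).
Qed.

End Neighbourhoods.

Lemma forces_Cond_of_mem x G H :
  (forall w, wset w G <-> forces canonical_model w G) ->
  (forall w, wset w H -> forces canonical_model w H) ->
  wset x (Cond G H) -> forces canonical_model x (Cond G H).
Proof.
  intros IHG IHH HGH alpha [y [Hy Halpha]] [z [Hz HzG]].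
  pose proof (wset_maxcons x) as HX.
  destruct (classic (leX (wset x) (wform y) G)) as [HyG|HnyG].
  - exists alpha; split; [exists y; split; assumption|].
    split; [auto|split; [exists z; split; assumption|]].
    intros u Hu HuG; apply IHH, (nbhd_leX_cond HX Hy HGH HyG); [apply Halpha, Hu|apply IHG, HuG].
  - destruct (exists_world_condset HX HnyG) as [y' [Hform [Hsub HnB]]].
    assert (Hy'G : wset y' G).
    { pose proof (wset_wform y') as Hy'; rewrite Hform in Hy'.
      apply (maxcons_Or (wset_maxcons y')) in Hy' as [HB|HG]; [contradiction|exact HG]. }
    exists (nbhd (wset x) y'); split; [apply cN_nbhd; rewrite Hform; exact Hsub|split].
    + intros u Hu; apply Halpha; rewrite <- Hform in Hsub.
      exact (nbhd_refine_subset HX Hform Hsub HnB Hu).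
    + split; [exists y'; split; [apply nbhd_center|apply IHG, Hy'G]|].
      intros u Hu HuG; apply IHH, (nbhd_refine_cond HX Hform Hsub HGH Hu), IHG, HuG.
Qed.

Lemma mem_of_forces_Cond x G H :
  (forall w, wset w G <-> forces canonical_model w G) ->
  (forall w, forces canonical_model w H -> wset w H) ->
  forces canonical_model x (Cond G H) -> wset x (Cond G H).
Proof.
  intros IHG IHH Hforce; apply NNPP; intros HnGH.
  pose proof (wset_maxcons x) as HX.
  destruct (exists_world_condset HX HnGH) as [y [Hform [Hsub HnH]]].
  assert (HyG : wset y G) by (rewrite <- Hform; apply wset_wform).
  destruct (Hforce (nbhd (wset x) y)) as [beta [[y2 [_ Hbeta]] [Hbeta_sub [[u [Hu HuG]] Hall]]]].
  - apply cN_nbhd; rewrite Hform; exact Hsub.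
  - exists y; split; [apply nbhd_center|apply IHG, HyG].
  - assert (Hy2 : beta y2) by (apply Hbeta, nbhd_center).
    destruct (Hbeta_sub y2 Hy2) as [[_ [Hle HnG]] | [Hset _]].
    + rewrite Hform in Hle, HnG; apply HnG.
      rewrite <- (nbhd_leX_mem HX Hle (proj1 (Hbeta u) Hu) (proj2 (IHG u) HuG)).
      apply IHG, HuG.
    + apply HnH; rewrite <- Hset; apply IHH, Hall; [exact Hy2|apply IHG; rewrite Hset; exact HyG].
Qed.

Lemma truth_lemma F : forall w : cworld, wset w F <-> forces canonical_model w F.
Proof.
  induction F as [p| |F1 IH1 F2 IH2|F1 IH1 F2 IH2|F1 IH1 F2 IH2|G IHG H IHH]; intros w;
    pose proof (wset_maxcons w) as Hw.
  - reflexivity.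
  - split; [apply (maxcons_Bot Hw)|contradiction].
  - pose proof (maxcons_And Hw F1 F2); pose proof (IH1 w); pose proof (IH2 w); simpl; tauto.
  - pose proof (maxcons_Or Hw F1 F2); pose proof (IH1 w); pose proof (IH2 w); simpl; tauto.
  - pose proof (maxcons_Imp Hw F1 F2); pose proof (IH1 w); pose proof (IH2 w); simpl; tauto.
  - split; [apply forces_Cond_of_mem|apply mem_of_forces_Cond]; auto; apply IHH.
Qed.

Theorem mainTheorem3 :
  forall (F : form) (X : fset) (A : form) (HX : maxcons X) (HA : X A),
    X F <-> @forces canonical_model (@mkworld X A (conj HX HA)) F.
Proof.
  intros F X A HX HA; exact (truth_lemma F (@mkworld X A (conj HX HA))).
Qed.
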